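(* Let $k$ be a positive integer, let $n$ and $m$ be integers with $0<m\le\binom{n}{2}$, and let $G$ be any ordered graph with vertex set $[n]$ (with the natural order) and exactly $m$ edges. Then \[ N_{\mathrm{ord}}(S_L(k), S_R(n,m)) \le N_{\mathrm{ord}}(S_L(k), G) \le N_{\mathrm{ord}}(S_L(k), S_L(n,m)). \]
   Context: An ordered graph is a graph together with a total order on its vertex set; here vertex sets are $[n]=\{1,\dots,n\}$ with the natural order. For an ordered graph $F$ on $[s]$ and an ordered graph $G$ on $[n]$, $N_{\mathrm{ord}}(F,G)$ is the number of sets $\{v_1,\dots,v_s\}\subseteq[n]$ with $v_1<\dots<v_s$ such that $\{v_i,v_j\}\in E(G)$ whenever $\{i,j\}\in E(F)$. For positive integers $n$ and $m\le\binom{n}{2}$, let $f(n,a)=\binom{a}{2}+a(n-a)$, let $a$ be the largest integer with $f(n,a)\le m$ (so $0\le a\le n$), and let $b=m-f(n,a)$. The ordered graph $S_L(n,m)$ has vertex set $[n]$ and edge set consisting of all pairs $\{v,w\}$ of distinct vertices with $v\in[a]$, $w\in[n]$, together with the edges $\{a+1,j\}$ for $a+2\le j\le a+b+1$; it has exactly $m$ edges. The ordered graph $S_R(n,m)$ is $S_L(n,m)$ with the vertex order reversed (equivalently, the ordered graph on $[n]$ obtained by relabeling each vertex $i$ of $S_L(n,m)$ as $n+1-i$). $S_L(k):=S_L(k+1,k)$ is the ordered star on $[k+1]$ with edges $\{1,j\}$ for $2\le j\le k+1$ (the center is the smallest vertex). Thus $N_{\mathrm{ord}}(S_L(k),G)=\sum_{i\in[n]}\binom{d^+_G(i)}{k}$,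 where $d^+_G(i)=|\{j>i:\{i,j\}\in E(G)\}|$. *)

From mathcomp Require Import all_boot.
Unset Printing Implicit Defensive.

(* Ordered graphs on [n] = {1,..,n} are represented on 'I_n = {0,..,n-1}
   (vertex i+1 of the paper is the ordinal i); the natural order is that of
   the ordinals. *)
Definition is_graph (n : nat) (G : rel 'I_n) : Prop :=
  (forall i j, G i j = G j i) /\ (forall i, G i i = false).

Definition num_edges (n : nat) (G : rel 'I_n) : nat :=
  #|[set p : 'I_n * 'I_n | (p.1 < p.2) && G p.1 p.2]|.

Definition N_ord (s n : nat) (F : rel 'I_s) (G : rel 'I_n) : nat :=
  #|[set v : {ffun 'I_s -> 'I_n} |
      [forall i : 'I_s, forall j : 'I_s, (i < j)%N ==> (v i < v j)%N] &&
      [forall i : 'I_s, forall j : 'I_s, F i j ==> G (v i) (v j)]]|.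

Definition fna (n a : nat) : nat := 'C(a, 2) + a * (n - a).

Definition aSL (n m : nat) : nat := \max_(a < n.+1 | fna n a <= m) a.
Definition bSL (n m : nat) : nat := m - fna n (aSL n m).

(* S_L(n,m), 0-indexed: vertex v in [a] (paper) is ordinal v < a;
   paper vertex a+1 is ordinal a, paper vertices a+2..a+b+1 are ordinals
   a+1..a+b. *)
Definition S_L (n m : nat) : rel 'I_n := fun v w =>
  let a := aSL n m in let b := bSL n m in
  (v != w) &&
  [|| (v < a), (w < a),
      (v == a :> nat) && (a + 1 <= w <= a + b) |
      (w == a :> nat) && (a + 1 <= v <= a + b)].

Definition S_R (n m : nat) : rel 'I_n := fun v w => S_L n m (rev_ord v) (rev_ord w).

Definition star (k : nat) : rel 'I_k.+1 := fun i j =>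
  ((i == 0 :> nat) && (j != 0 :> nat)) || ((j == 0 :> nat) && (i != 0 :> nat)).

(* Counting the copies of the star by their centre c gives
   N_ord(S_L(k), G) = sum_c C(d+(c), k), so only the out-degree sequence
   matters; it satisfies d+(c) <= n-1-c and sum_c d+(c) = m.  As x |-> C(x, k)
   is a nonnegative combination of the hinge functions x |-> (x - u)+, it is
   enough to compare the excess sums sum_c (d+(c) - t)+ for every t.
   S_L(n,m) fills the capacities n-1-c greedily from the left, which maximises
   every excess sum.  The out-degrees of S_R(n,m) agree with the capacities up
   to height a and never exceed a+1, so for t <= a they have the largest
   truncations min(d+(c), t) and hence the least excess, and for t > a their
   excess vanishes. *)

From mathcomp Require Import all_boot zify.

Set Implicit Arguments.
Unset Strict Implicit.

Definition increasing s n (v : 'I_s -> 'I_n) := forall i j : 'I_s, i < j -> v i < v j.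

Section IncreasingMaps.

Variables s n : nat.
Implicit Types v w : 'I_s -> 'I_n.

Lemma increasingP (v : {ffun 'I_s -> 'I_n}) :
  reflect (increasing v) [forall i : 'I_s, forall j : 'I_s, (i < j) ==> (v i < v j)].
Proof.
apply: (iffP forallP) => [v_incr i j | v_incr i].
  by move/forallP/(_ j)/implyP: (v_incr i); apply.
by apply/forallP => j; apply/implyP; apply: v_incr.
Qed.

Lemma ltn_increasing v : increasing v -> forall i j, (v i < v j) = (i < j).
Proof.
move=> v_incr i j; case: (ltngtP i j) => [ij | ji | /val_inj ->]; first exact: v_incr.
  by apply/negbTE; rewrite -leqNgt ltnW // v_incr.
exact: ltnn.
Qed.

Lemma increasing_inj v : increasing v -> injective v.
Proof.
move=> v_incr i j vij; apply/val_inj.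
by case: (ltngtP i j) => // /v_incr; rewrite vij ltnn.
Qed.

Lemma increasing_image_inj v w : increasing v -> increasing w ->
  v @: setT = w @: setT -> v =1 w.
Proof.
pose ltv := relpre (@nat_of_ord n) ltn.
have sorted_img u : increasing u -> sorted ltv [seq u i | i <- enum 'I_s].
  move=> u_incr; rewrite sorted_map; apply: (sub_sorted u_incr).
  by have := iota_ltn_sorted 0 s; rewrite -val_enum_ord sorted_map.
have mem_img u x : (x \in [seq u i | i <- enum 'I_s]) = (x \in u @: setT).
  apply/mapP/imsetP => -[i _ ->]; exists i => //; exact: mem_enum.
move=> v_incr w_incr vw_img.
suff /eq_in_map vw : [seq v i | i <- enum 'I_s] = [seq w i | i <- enum 'I_s].
  by move=> i; apply: vw; rewrite mem_enum.
apply: (irr_sorted_eq (leT := ltv)) => [y x z|x|||x]; first exact: ltn_trans.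
- exact: ltnn.
- exact: sorted_img.
- exact: sorted_img.
by rewrite !mem_img vw_img.
Qed.

Lemma increasing_enum (B : {set 'I_n}) (x0 : 'I_n) : #|B| = s ->
  exists2 v : {ffun 'I_s -> 'I_n}, increasing v & v @: setT = B.
Proof.
move=> cardB; have sizeB : size (enum B) = s by rewrite -cardE.
have sortedB : sorted ltn (map val (enum B)).
  rewrite -[enum _](eq_filter (mem_enum _)) -(eq_filter (mem_map val_inj _)) -filter_map.
  by rewrite (sorted_filter ltn_trans) // unlock val_ord_enum iota_ltn_sorted.
exists [ffun i : 'I_s => nth x0 (enum B) i].
  move=> i j ij; rewrite !ffunE.
  have := sorted_ltn_nth ltn_trans (val x0) sortedB i j.
  by rewrite !inE size_map sizeB !ltn_ord !(nth_map x0) ?sizeB //; apply.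
apply/setP => y; apply/imsetP/idP => [[i _ ->] | yB].
  by rewrite ffunE -mem_enum mem_nth ?sizeB.
have y_idx : index y (enum B) < s by rewrite -sizeB index_mem mem_enum.
by exists (Ordinal y_idx); rewrite // ffunE nth_index ?mem_enum.
Qed.

End IncreasingMaps.

Definition outnbrs n (H : rel 'I_n) (c : 'I_n) := [set j : 'I_n | (c < j) && H c j].
Definition outdeg n (H : rel 'I_n) (c : 'I_n) := #|outnbrs H c|.

Definition star_copy n k (H : rel 'I_n) (v : {ffun 'I_k.+1 -> 'I_n}) :=
  [forall i : 'I_k.+1, forall j : 'I_k.+1, (i < j) ==> (v i < v j)] &&
  [forall i : 'I_k.+1, forall j : 'I_k.+1, star k i j ==> H (v i) (v j)].

Section StarCopies.

Variables (n k : nat) (H : rel 'I_n).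
Hypothesis H_sym : symmetric H.

Lemma star_copyP (v : {ffun 'I_k.+1 -> 'I_n}) :
  reflect (increasing v /\ forall i : 'I_k.+1, 0 < i -> H (v ord0) (v i)) (star_copy H v).
Proof.
apply: (iffP andP) => [[/increasingP v_incr v_edges] | [v_incr v_edges]].
  split=> // i i_gt0; move/forallP/(_ ord0)/forallP/(_ i)/implyP: v_edges; apply.
  by rewrite /star /= -lt0n i_gt0.
split; first exact/increasingP.
apply/forallP => i; apply/forallP => j; apply/implyP.
have is_ord0 (x : 'I_k.+1) : x == 0 :> nat -> x = ord0 by move=> /eqP x0; apply: val_inj.
by case/orP => /andP [/is_ord0 -> x_gt0]; rewrite ?[H _ (v ord0)]H_sym v_edges // lt0n.
Qed.

Lemma star_copy_at_spec c v : star_copy H v && (v ord0 == c) ->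
  [/\ increasing v, v ord0 = c & forall i : 'I_k.+1, 0 < i -> v i \in outnbrs H c].
Proof.
case/andP => /star_copyP [v_incr v_edges] /eqP v0.
split=> // i i_gt0; rewrite inE -v0 (ltn_increasing v_incr) i_gt0.
exact: v_edges.
Qed.

Lemma star_copy_of_leaves c (B : {set 'I_n}) : B \subset outnbrs H c -> #|B| = k ->
  exists2 v : {ffun 'I_k.+1 -> 'I_n}, star_copy H v && (v ord0 == c) & v @: setT :\ c = B.
Proof.
move=> B_nbrs cardB; have cB : c \notin B by apply/negP => /(subsetP B_nbrs); rewrite inE ltnn.
have [v v_incr v_img] :
    exists2 v : {ffun 'I_k.+1 -> 'I_n}, increasing v & v @: setT = c |: B.
  by apply: (increasing_enum c); rewrite cardsU1 cB cardB.
have v0 : v ord0 = c.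
  have /imsetP [i _ ci] : c \in v @: setT by rewrite v_img setU11.
  have : v ord0 \in c |: B by rewrite -v_img imset_f.
  case/setU1P => // /(subsetP B_nbrs); rewrite inE ci => /andP [lt _].
  by rewrite (ltn_increasing v_incr) in lt.
exists v; last by rewrite v_img setU1K.
rewrite v0 eqxx andbT; apply/star_copyP; split=> // i i_gt0.
have : v i \in c |: B by rewrite -v_img imset_f.
case/setU1P => [vi_c | /(subsetP B_nbrs)]; last by rewrite inE v0 => /andP [].
by have := v_incr ord0 i i_gt0; rewrite vi_c v0 ltnn.
Qed.

Lemma card_star_copies_at c :
  #|[set v : {ffun 'I_k.+1 -> 'I_n} | star_copy H v && (v ord0 == c)]| = 'C(outdeg H c, k).
Proof.
have c_img (v : {ffun 'I_k.+1 -> 'I_n}) : star_copy H v && (v ord0 == c) -> c \in v @: setT.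
  by move=> v_copy; have [_ <- _] := star_copy_at_spec v_copy; apply: imset_f.
pose leaves (v : {ffun 'I_k.+1 -> 'I_n}) := v @: setT :\ c.
rewrite -cards_draws -(card_in_imset (f := leaves)) => [|v w]; last first.
  rewrite !inE => v_copy w_copy vw.
  have [v_incr _ _] := star_copy_at_spec v_copy.
  have [w_incr _ _] := star_copy_at_spec w_copy.
  apply/ffunP/(increasing_image_inj v_incr w_incr).
  by rewrite -(setD1K (c_img v v_copy)) -(setD1K (c_img w w_copy)) -/(leaves v) vw.
apply: eq_card => B; rewrite inE.
apply/imsetP/andP => [[v] | [B_nbrs /eqP /(star_copy_of_leaves B_nbrs)]]; last first.
  by case=> v v_copy <-; exists v; rewrite ?inE.
rewrite inE => v_copy ->; have [v_incr v0 v_nbrs] := star_copy_at_spec v_copy; split.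
  apply/subsetP => y /setD1P [yc /imsetP [i _ y_def]]; subst y; apply: v_nbrs.
  by rewrite lt0n; apply: contra_neq yc => i0; rewrite -v0; congr (v _); apply: val_inj.
have := cardsD1 c (v @: setT); rewrite c_img // card_imset ?cardsT ?card_ord.
  by rewrite add1n => -[/esym ->].
exact: increasing_inj.
Qed.

Lemma N_ord_star : N_ord k.+1 n (star k) H = \sum_c 'C(outdeg H c, k).
Proof.
rewrite /N_ord -sum1_card (partition_big (fun v : {ffun 'I_k.+1 -> 'I_n} => v ord0) xpredT) //=.
apply: eq_bigr => c _; rewrite -card_star_copies_at -sum1_card.
by apply: eq_bigl => v; rewrite !inE.
Qed.

End StarCopies.

Definition bin_step k u := if u is u'.+1 then 'C(u'.+1, k) - 'C(u', k) else 'C(0, k).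

Lemma sum_bin_step k x : \sum_(u < x.+1) bin_step k u = 'C(x, k).
Proof.
elim: x => [|x IHx]; first by rewrite big_ord_recr big_ord0.
by rewrite big_ord_recr IHx /= subnKC // leq_bin2l.
Qed.

Lemma bin_excess k N x : x <= N -> 'C(x, k.+1) = \sum_(u < N) bin_step k u * (x - u).
Proof.
elim: x => [|x IHx] x_le_N.
  by rewrite bin0n; apply/esym/big1 => u _; rewrite sub0n muln0.
have -> : \sum_(u < N) bin_step k u * (x.+1 - u) =
    \sum_(u < N) bin_step k u * (x - u) + \sum_(u < N | u < x.+1) bin_step k u.
  rewrite [X in _ + X]big_mkcond -big_split; apply: eq_bigr => u _ /=.
  case: ltnP => [u_le_x | x_lt_u]; first by rewrite subSn // mulnS addnC.
  by rewrite (_ : x.+1 - u = 0) 1?(_ : x - u = 0) ?muln0 //; lia.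
rewrite -IHx ?(ltnW x_le_N) //.
by rewrite -(big_ord_widen N (bin_step k) x_le_N) sum_bin_step binS.
Qed.

Lemma sum_bin_le_of_excess (I : finType) (d e : I -> nat) k :
  (forall t, \sum_i (d i - t) <= \sum_i (e i - t)) ->
  \sum_i 'C(d i, k) <= \sum_i 'C(e i, k).
Proof.
case: k => [|k] excess_le.
  by under eq_bigr do rewrite bin0; under [X in _ <= X]eq_bigr do rewrite bin0.
pose N := \sum_i (d i + e i).
have le_N i : d i + e i <= N by rewrite /N (bigD1 i) //= leq_addr.
have dN i : d i <= N := leq_trans (leq_addr _ _) (le_N i).
have eN i : e i <= N := leq_trans (leq_addl _ _) (le_N i).
rewrite (eq_bigr _ (fun i _ => bin_excess k (dN i))).
rewrite (eq_bigr _ (fun i _ => bin_excess k (eN i))).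
rewrite exchange_big [X in _ <= X]exchange_big /=; apply: leq_sum => u _.
by rewrite -!big_distrr leq_mul.
Qed.

Lemma card_ord_range n lo hi : hi <= n -> #|[set j : 'I_n | lo <= j < hi]| = hi - lo.
Proof.
move=> hi_le_n; rewrite -sum1_card (eq_bigl (fun j : 'I_n => lo <= j < hi)) => [|j].
  2: by rewrite inE.
rewrite -(big_mkord (fun j => lo <= j < hi) (fun=> 1)) -big_nat_widen //.
transitivity (\sum_(lo <= i < hi) 1); last by rewrite sum_nat_const_nat muln1.
by rewrite (big_nat_widenl lo 0).
Qed.

Lemma sum_nonincreasing_le n (f : nat -> nat) (A : {pred 'I_n}) :
  {homo f : x y /~ x <= y} -> \sum_(i in A) f i <= \sum_(i < #|A|) f i.
Proof.
move=> f_noninc; elim: n A => [|n IHn] A; first by rewrite big_ord0.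
pose A' := [pred i : 'I_n | widen_ord (leqnSn n) i \in A].
have cardA : #|A| = #|A'| + (ord_max \in A).
  rewrite -!sum1_card big_mkcond big_ord_recr [in RHS]big_mkcond /=.
  by congr (_ + _); case: (ord_max \in A).
rewrite big_mkcond big_ord_recr /= -big_mkcond cardA.
case: (ord_max \in A); last by rewrite !addn0 IHn.
rewrite addn1 big_ord_recr leq_add ?IHn // f_noninc //.
by rewrite -[n in _ <= n]card_ord max_card.
Qed.

Lemma excess_le_of_prefix n m (cap : nat -> nat) (d s : 'I_n -> nat) t :
  {homo cap : x y /~ x <= y} -> (forall i, d i <= cap i) -> \sum_i d i <= m ->
  (forall p, p <= n -> minn m (\sum_(i < p) cap i) <= \sum_(i < n | i < p) s i) ->
  \sum_i (d i - t) <= \sum_i (s i - t).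
Proof.
move=> cap_noninc d_le_cap sum_d_le s_prefix.
set J := [set i | t < d i].
have J_le_n : #|J| <= n by rewrite -[n in _ <= n]card_ord max_card.
have excess_d : \sum_i (d i - t) + t * #|J| = \sum_(i in J) d i.
  rewrite (bigID (mem J)) /= [X in _ + X + _]big1 => [|i]; last first.
    by rewrite inE -leqNgt -subn_eq0 => /eqP.
  rewrite addn0 mulnC -sum_nat_const -big_split; apply: eq_bigr => i.
  by rewrite inE => /ltnW; apply: subnK.
have J_le_m : \sum_(i in J) d i <= m.
  by apply: leq_trans sum_d_le; rewrite [X in _ <= X](bigID (mem J)) /= leq_addr.
have J_le_cap : \sum_(i in J) d i <= \sum_(i < #|J|) cap i.
  apply: leq_trans (sum_nonincreasing_le _ cap_noninc).
  by apply: leq_sum => i _; apply: d_le_cap.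
have prefix_s : \sum_(i < n | i < #|J|) s i <= \sum_i (s i - t) + t * #|J|.
  apply: (@leq_trans (\sum_(i < n | i < #|J|) (s i - t + t))).
    by apply: leq_sum => i _; lia.
  rewrite big_split /= leq_add //.
    by rewrite [X in _ <= X](bigID (fun i : 'I_n => i < #|J|)) /= leq_addr.
  rewrite (eq_bigl (fun i => i \in [set j : 'I_n | 0 <= j < #|J|])) => [|i]; last first.
    by rewrite inE.
  by rewrite sum_nat_const card_ord_range // subn0 mulnC.
have := s_prefix _ J_le_n; lia.
Qed.

Lemma excess_le_of_truncations (I : finType) (w d : I -> nat) t :
  \sum_i w i <= \sum_i d i -> (forall i, minn (d i) t <= minn (w i) t) ->
  \sum_i (w i - t) <= \sum_i (d i - t).
Proof.
move=> sum_le trunc_le.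
have split_excess (f : I -> nat) : \sum_i (f i - t) + \sum_i minn (f i) t = \sum_i f i.
  by rewrite -big_split; apply: eq_bigr => i _ /=; lia.
have trunc_sum_le : \sum_i minn (d i) t <= \sum_i minn (w i) t.
  by apply: leq_sum => i _; apply: trunc_le.
have := split_excess w; have := split_excess d; lia.
Qed.

Lemma num_edges_outdeg n (H : rel 'I_n) : num_edges n H = \sum_c outdeg H c.
Proof.
rewrite /num_edges /outdeg -sum1_card.
under [RHS]eq_bigr do rewrite -sum1_card.
by rewrite pair_big_dep /=; apply: eq_bigl => -[i j]; rewrite !inE.
Qed.

Lemma outdeg_le n (H : rel 'I_n) c : outdeg H c <= n - c.+1.
Proof.
rewrite -(@card_ord_range n c.+1 n) //; apply: subset_leq_card.
by apply/subsetP => j; rewrite !inE ltn_ord andbT => /andP [].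
Qed.

Lemma num_edges_rev n (H : rel 'I_n) : symmetric H ->
  num_edges n (fun v w => H (rev_ord v) (rev_ord w)) = num_edges n H.
Proof.
have rev_le (H' : rel 'I_n) : symmetric H' ->
    num_edges n (fun v w => H' (rev_ord v) (rev_ord w)) <= num_edges n H'.
  move=> H'_sym; pose flip (p : 'I_n * 'I_n) := (rev_ord p.2, rev_ord p.1).
  have flip_inj : injective flip.
    by apply: (can_inj (g := flip)) => -[i j]; rewrite /flip /= !rev_ordK.
  rewrite /num_edges -(card_imset _ flip_inj); apply/subset_leq_card/subsetP.
  move=> _ /imsetP [[i j] + ->]; rewrite !inE /= => /andP [ij ij_edge].
  by rewrite H'_sym ij_edge andbT; have := ltn_ord j; lia.
move=> H_sym; apply/anti_leq; rewrite rev_le //=.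
have /rev_le : symmetric (fun v w => H (rev_ord v) (rev_ord w)) by move=> v w; apply: H_sym.
by congr (_ <= _); apply: eq_card => p; rewrite !inE !rev_ordK.
Qed.

Lemma fnaS n a : a < n -> fna n a.+1 = fna n a + (n - a.+1).
Proof. by move=> a_lt_n; rewrite /fna binS bin1; nia. Qed.

Lemma sum_capacity n a : a <= n -> \sum_(i < a) (n - i.+1) = fna n a.
Proof.
elim: a => [|a IHa] a_le_n; first by rewrite big_ord0 /fna bin0n mul0n.
by rewrite big_ord_recr IHa ?fnaS // ltnW.
Qed.

Section ExtremalGraphs.

Variables n m : nat.
Hypothesis m_le : m <= 'C(n, 2).

Lemma aSL_spec :
  [/\ aSL n m <= n, fna n (aSL n m) <= m & aSL n m < n -> m < fna n (aSL n m).+1].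
Proof.
have nonempty : 0 < #|[pred a : 'I_n.+1 | fna n a <= m]|.
  by apply/card_gt0P; exists ord0; rewrite inE /fna bin0n mul0n.
have [a0 a0_ok a0_max] := eq_bigmax_cond (fun a : 'I_n.+1 => nat_of_ord a) nonempty.
have a_a0 : aSL n m = a0 by rewrite /aSL -a0_max.
rewrite a_a0; split; first by rewrite -ltnS ltn_ord.
  by move: a0_ok; rewrite inE.
move=> a0_lt_n; rewrite ltnNge; apply/negP => fna_le.
have a0S_ord : a0.+1 < n.+1 by rewrite ltnS.
have : a0.+1 <= aSL n m.
  exact: (@leq_bigmax_cond _ (fun a : 'I_n.+1 => fna n a <= m) _ (Ordinal a0S_ord)).
by rewrite a_a0 ltnn.
Qed.

Lemma bSL_spec : [/\ aSL n m <= n, fna n (aSL n m) + bSL n m = m,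
  aSL n m < n -> bSL n m < n - (aSL n m).+1 & aSL n m = n -> bSL n m = 0].
Proof.
have [a_le_n fna_le a_max] := aSL_spec; rewrite /bSL; split=> //.
- exact: subnKC.
- by move=> a_lt_n; have := a_max a_lt_n; rewrite fnaS //; lia.
by move=> a_n; move: m_le; rewrite a_n /fna subnn muln0 addn0 => ?; lia.
Qed.

Lemma S_L_sym : symmetric (S_L n m).
Proof.
move=> v w; rewrite /S_L; cbv zeta; rewrite eq_sym; congr (_ && _).
by rewrite orbCA; do 2 congr (_ || _); rewrite orbC.
Qed.

Lemma S_R_sym : symmetric (S_R n m).
Proof. by move=> v w; apply: S_L_sym. Qed.

Lemma outdeg_SL c : outdeg (S_L n m) c =
  if c < aSL n m then n - c.+1 else if c == aSL n m :> nat then bSL n m else 0.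
Proof.
have [a_le_n _ b_lt _] := bSL_spec; have c_lt_n := ltn_ord c.
rewrite /outdeg /outnbrs /S_L; cbv zeta; move: a_le_n b_lt.
generalize (aSL n m) (bSL n m) => a b a_le_n b_lt.
case: ltngtP => [c_lt_a | a_lt_c | c_a].
- rewrite -(@card_ord_range n c.+1 n) //; apply: eq_card => j.
  by rewrite !inE -val_eqE /=; have := ltn_ord j; lia.
- apply/eqP; rewrite cards_eq0; apply/eqP/setP => j.
  by rewrite !inE -val_eqE /=; have := ltn_ord j; lia.
have b_lt_cap : b < n - a.+1 by apply: b_lt; rewrite -c_a.
transitivity #|[set j : 'I_n | a.+1 <= j < a.+1 + b]|.
  by apply: eq_card => j; rewrite !inE -val_eqE /=; have := ltn_ord j; lia.
by rewrite card_ord_range ?addKn //; lia.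
Qed.

Lemma outdeg_SR c : outdeg (S_R n m) c =
  if n - c.+1 < aSL n m then n - c.+1
  else aSL n m + (aSL n m < n - c.+1 <= aSL n m + bSL n m).
Proof.
have [a_le_n _ _ _] := bSL_spec; have c_lt_n := ltn_ord c.
rewrite /outdeg /outnbrs /S_R /S_L; cbv zeta; move: a_le_n.
generalize (aSL n m) (bSL n m) => a b a_le_n.
have card_tail x : x <= n -> #|[set j : 'I_n | n - x <= j < n]| = x.
  by move=> x_le_n; rewrite card_ord_range // subKn.
case: ifP => [r_lt_a | r_ge_a].
  rewrite -[RHS]card_tail ?leq_subr //; apply: eq_card => j.
  by rewrite !inE -val_eqE /=; have := ltn_ord j; lia.
case: (boolP (a < n - c.+1 <= a + b)) => r_in_range.
  rewrite -[RHS]card_tail; last by lia.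
  by apply: eq_card => j; rewrite !inE -val_eqE /=; have := ltn_ord j; lia.
rewrite -[RHS]card_tail; last by lia.
by apply: eq_card => j; rewrite !inE -val_eqE /=; have := ltn_ord j; lia.
Qed.

Lemma sum_outdeg_SL : \sum_c outdeg (S_L n m) c = m.
Proof.
have [a_le_n fna_b _ a_n_b0] := bSL_spec.
rewrite -[RHS]fna_b (bigID (fun c : 'I_n => c < aSL n m)) /=; congr (_ + _).
  rewrite -sum_capacity // (big_ord_widen n (fun i => n - i.+1) a_le_n).
  by apply: eq_bigr => c c_lt_a; rewrite outdeg_SL c_lt_a.
case: (ltnP (aSL n m) n) => [a_lt_n | n_le_a]; last first.
  rewrite a_n_b0 ?big_pred0 // => [c|]; last exact/anti_leq/andP.
  by rewrite (leq_trans (ltn_ord c) n_le_a).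
rewrite (bigD1 (Ordinal a_lt_n)) ?ltnn //= outdeg_SL ltnn eqxx big1 ?addn0 //.
move=> c /andP [c_ge_a c_ne_a]; rewrite outdeg_SL (negbTE c_ge_a).
by rewrite -[c == _ :> nat]/(c == Ordinal a_lt_n) (negbTE c_ne_a).
Qed.

Lemma outdeg_SL_prefix p : p <= n ->
  minn m (\sum_(i < p) (n - i.+1)) <= \sum_(i < n | i < p) outdeg (S_L n m) i.
Proof.
move=> p_le_n; case: (leqP p (aSL n m)) => [p_le_a | a_lt_p].
  rewrite (big_ord_widen n (fun i => n - i.+1) p_le_n) geq_min; apply/orP; right.
  apply/eq_leq/eq_bigr => i i_lt_p; rewrite outdeg_SL ifT //.
  exact: leq_trans i_lt_p p_le_a.
rewrite geq_min -{1}sum_outdeg_SL (bigID (fun i : 'I_n => i < p)) /=.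
rewrite [X in _ + X]big1 ?addn0 ?leqnn // => i; rewrite -leqNgt => p_le_i.
have a_lt_i := leq_trans a_lt_p p_le_i.
by rewrite outdeg_SL ltnNge (ltnW a_lt_i) /= gtn_eqF.
Qed.

End ExtremalGraphs.

Lemma excess_outdeg_SR_le n m (G : rel 'I_n) t :
  m <= 'C(n, 2) -> num_edges n G = m ->
  \sum_i (outdeg (S_R n m) i - t) <= \sum_i (outdeg G i - t).
Proof.
move=> m_le G_edges; have [a_le_n _ _ _] := bSL_spec m_le.
case: (leqP t (aSL n m)) => [t_le_a | a_lt_t].
  apply: excess_le_of_truncations => [|i].
    rewrite -!num_edges_outdeg /S_R num_edges_rev; last exact: S_L_sym.
    by rewrite G_edges num_edges_outdeg sum_outdeg_SL.
  by rewrite outdeg_SR //; have := outdeg_le G i; case: ifP => _; lia.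
rewrite big1 // => i _; apply/eqP; rewrite subn_eq0 outdeg_SR //.
case: ifP => [r_lt_a | _]; first lia.
by apply: leq_trans a_lt_t; rewrite -addn1 leq_add2l leq_b1.
Qed.

Lemma excess_outdeg_le_SL n m (G : rel 'I_n) t :
  m <= 'C(n, 2) -> num_edges n G = m ->
  \sum_i (outdeg G i - t) <= \sum_i (outdeg (S_L n m) i - t).
Proof.
move=> m_le G_edges.
apply: (excess_le_of_prefix (m := m) (cap := fun i => n - i.+1)) => [x y x_le_y|i||p].
- by rewrite leq_sub2l.
- exact: outdeg_le.
- by rewrite -num_edges_outdeg G_edges.
exact: outdeg_SL_prefix.
Qed.

Theorem theorem2 (k n m : nat) (G : rel 'I_n) :
  0 < k -> 0 < m -> m <= 'C(n, 2) ->
  is_graph n G -> num_edges n G = m ->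
  N_ord k.+1 n (star k) (S_R n m) <= N_ord k.+1 n (star k) G /\
  N_ord k.+1 n (star k) G <= N_ord k.+1 n (star k) (S_L n m).
Proof.
move=> _ _ m_le [G_sym _] G_edges.
rewrite !(N_ord_star k G_sym, N_ord_star k (@S_L_sym n m), N_ord_star k (@S_R_sym n m)).
by split; apply: sum_bin_le_of_excess => t;
  [apply: excess_outdeg_SR_le | apply: excess_outdeg_le_SL].
Qed.
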